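(* Let $r\ge1$, let $x$ be a positive integer and let $\{(X_t,Y_t)\}_{t\ge 0}$ be the CA competition process with fitness ratio $r$ started at $(x,x)$. Let $\tau_2=\inf\{t\ge 1: X_t=Y_t\}$ be the time of the second tie (the first tie being at time $0$). Then \[ \mathbb{P}[\tau_2<\infty]\le\frac{2}{r+1}. \]
   Context: The CA competition process with fitness ratio $r\ge 1$ started at $(x_0,y_0)$ is the discrete-time Markov chain $\{(X_t,Y_t)\}_{t\ge0}$ on $\{(x,y)\in\mathbb{Z}^2: x\ge1,y\ge1\}$ with $(X_0,Y_0)=(x_0,y_0)$ and transition probabilities: from $(x,y)$ it moves to $(x+1,y)$ with probability $\frac{rx}{rx+y}$ and to $(x,y+1)$ with probability $\frac{y}{rx+y}$. $\inf\emptyset=\infty$. *)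

From Stdlib Require Import Reals Lra Lia.
From Coquelicot Require Import Coquelicot.
Open Scope R_scope.

Definition pX (r : R) (x y : nat) : R := r * INR x / (r * INR x + INR y).
Definition pY (r : R) (x y : nat) : R := INR y / (r * INR x + INR y).

(* tie_within r n x y = P_(x,y)[ exists t in {1,...,n}, X_t = Y_t ],
   computed by first-step analysis on the path measure of the chain. *)
Fixpoint tie_within (r : R) (n x y : nat) : R :=
  match n with
  | O => 0
  | S m =>
      pX r x y * (if Nat.eqb (S x) y then 1 else tie_within r m (S x) y)
    + pY r x y * (if Nat.eqb x (S y) then 1 else tie_within r m x (S y))
  end.

(* P_(x,y)[ tau_2 < oo ] with tau_2 = inf { t >= 1 : X_t = Y_t }:
   the increasing limit (= supremum) of P[tau_2 <= n]. *)
Definition prob_tau2_finite (r : R) (x y : nat) : Rbar :=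
  Sup_seq (fun n => tie_within r n x y).

(* Once X leads by k >= 1, the probability of ever returning to a tie is at most
   r^-k: the function (1/r)^(X - Y) is superharmonic for the chain on {X >= Y},
   because from (a, b) its expected one-step ratio is (a + r b)/(r a + b) <= 1
   whenever a >= b and r >= 1.  From a tie (x, x) the first step gives X the
   lead with probability r/(r+1) and Y the lead with probability 1/(r+1), so a
   second tie has probability at most r/(r+1) * 1/r + 1/(r+1) = 2/(r+1). *)
From Stdlib Require Import Reals Lra Lia.
From Coquelicot Require Import Coquelicot.
Open Scope R_scope.

Lemma Sup_seq_le_finite (u : nat -> Rbar) (M : R) :
  (forall n, Rbar_le (u n) M) -> Rbar_le (Sup_seq u) M.
Proof.
  intros hu; apply Rbar_not_lt_le; intros [n hn]%Sup_seq_minor_lt.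
  exact (Rbar_lt_not_le _ _ hn (hu n)).
Qed.

Section Transitions.

Variable r : R.
Hypothesis r_ge0 : 0 <= r.

Lemma pX_pY_nonneg (x y : nat) : 0 <= pX r x y /\ 0 <= pY r x y.
Proof.
  unfold pX, pY.
  assert (hx := pos_INR x). assert (hy := pos_INR y).
  destruct (Req_dec (r * INR x + INR y) 0) as [E | E].
  - unfold Rdiv; rewrite E, Rinv_0, !Rmult_0_r; lra.
  - assert (0 < r * INR x + INR y) by nra.
    split; apply Rmult_le_pos; try apply Rlt_le, Rinv_0_lt_compat; nra.
Qed.

(* Only [<=]: at (0, 0) both probabilities are [0] since [/ 0 = 0]. *)
Lemma pX_plus_pY_le1 (x y : nat) : pX r x y + pY r x y <= 1.
Proof.
  unfold pX, pY.
  assert (hx := pos_INR x). assert (hy := pos_INR y).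
  destruct (Req_dec (r * INR x + INR y) 0) as [E | E].
  - unfold Rdiv; rewrite E, Rinv_0, !Rmult_0_r; lra.
  - right; field; exact E.
Qed.

Lemma pX_diag (x : nat) : (1 <= x)%nat -> pX r x x = r / (r + 1).
Proof.
  intros hx; apply (le_INR 1) in hx; unfold pX; field; simpl in hx; nra.
Qed.

Lemma pY_diag (x : nat) : (1 <= x)%nat -> pY r x x = 1 / (r + 1).
Proof.
  intros hx; apply (le_INR 1) in hx; unfold pY; field; simpl in hx; nra.
Qed.

End Transitions.

Definition tie_from (r : R) (n x y : nat) : R :=
  if Nat.eqb x y then 1 else tie_within r n x y.

Lemma tie_within_succ (r : R) (n x y : nat) :
  tie_within r (S n) x y =
  pX r x y * tie_from r n (S x) y + pY r x y * tie_from r n x (S y).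
Proof. reflexivity. Qed.

Lemma first_step_le (r : R) (n x y : nat) (bX bY : R) : 0 <= r ->
  tie_from r n (S x) y <= bX -> tie_from r n x (S y) <= bY ->
  tie_within r (S n) x y <= pX r x y * bX + pY r x y * bY.
Proof.
  intros hr hX hY; rewrite tie_within_succ.
  destruct (pX_pY_nonneg r hr x y).
  apply Rplus_le_compat; apply Rmult_le_compat_l; assumption.
Qed.

Lemma tie_from_le1 (r : R) (n x y : nat) : 0 <= r -> tie_from r n x y <= 1.
Proof.
  intros hr; revert x y; induction n as [| n IH]; intros x y;
    unfold tie_from; destruct (Nat.eqb x y); try lra; try (simpl; lra).
  apply Rle_trans with (pX r x y * 1 + pY r x y * 1).
  - apply first_step_le; auto.
  - assert (h := pX_plus_pY_le1 r x y); lra.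
Qed.

Lemma lead_step_superharmonic (r a b : R) : 1 <= r -> 0 <= b -> b <= a -> 0 < a ->
  r * a / (r * a + b) * / r + b / (r * a + b) * r <= 1.
Proof.
  intros hr hb hba ha.
  assert (D : 0 < r * a + b) by nra.
  replace (r * a / (r * a + b) * / r + b / (r * a + b) * r)
    with ((a + r * b) / (r * a + b)) by (field; lra).
  apply Rmult_le_reg_r with (r * a + b); [exact D |].
  field_simplify; nra.
Qed.

Lemma tie_from_lead (r : R) (n k b : nat) : 1 <= r ->
  tie_from r n (b + k) b <= (/ r) ^ k.
Proof.
  intros hr; assert (hq : 0 < / r) by (apply Rinv_0_lt_compat; lra).
  revert k b; induction n as [| n IH]; intros [| k] b; unfold tie_from;
    rewrite ?Nat.add_0_r, ?Nat.eqb_refl; try (simpl; lra).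
  all: assert (E : Nat.eqb (b + S k) b = false) by (apply Nat.eqb_neq; lia); rewrite E.
  - apply Rlt_le, pow_lt; exact hq.
  - apply Rle_trans with (pX r (b + S k) b * (/ r) ^ S (S k) + pY r (b + S k) b * (/ r) ^ k).
    + apply first_step_le; [lra | |].
      * replace (S (b + S k)) with (b + S (S k))%nat by lia; apply IH.
      * replace (b + S k)%nat with (S b + k)%nat by lia; apply IH.
    + assert (hb := pos_INR b).
      assert (hlead : INR b + 1 <= INR (b + S k)) by (rewrite plus_INR, S_INR; pose proof (pos_INR k); lra).
      assert (h := lead_step_superharmonic r (INR (b + S k)) (INR b) hr hb ltac:(lra) ltac:(lra)).
      assert (hp : 0 < (/ r) ^ S k) by (apply pow_lt; exact hq).
      unfold pX, pY.
      replace ((/ r) ^ S (S k)) with ((/ r) ^ S k * / r) by (simpl; ring).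
      replace ((/ r) ^ k) with ((/ r) ^ S k * r) by (simpl; field; lra).
      nra.
Qed.

Lemma tie_within_diag_le (r : R) (n x : nat) : 1 <= r -> (1 <= x)%nat ->
  tie_within r n x x <= 2 / (r + 1).
Proof.
  intros hr hx; destruct n as [| n].
  - simpl; apply Rlt_le, Rdiv_lt_0_compat; lra.
  - apply Rle_trans with (pX r x x * (/ r) ^ 1 + pY r x x * 1).
    + apply first_step_le; [lra | | apply tie_from_le1; lra].
      replace (S x) with (x + 1)%nat by lia; apply tie_from_lead; exact hr.
    + rewrite pX_diag, pY_diag by (lra || exact hx).
      right; simpl; field; lra.
Qed.

Theorem corollary1 (r : R) (x : nat) (hr : 1 <= r) (hx : (1 <= x)%nat) :
  Rbar_le (prob_tau2_finite r x x) (Finite (2 / (r + 1))).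
Proof.
  apply Sup_seq_le_finite; intros n.
  apply tie_within_diag_le; assumption.
Qed.
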